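(* Let $f : S\oplus V \to \mathbb{R}_{0,3}$ be a (left) holomorphic Cliffordian function on the whole space $S\oplus V\cong\mathbb{R}^4$, i.e. $D\Delta f = 0$ on $\mathbb{R}^4$. Assume that $f$ and all its partial derivatives (of all components) up to order two are bounded on $\mathbb{R}^4$. Then $f$ is constant.
   Context: $\mathbb{R}_{0,3}$ is the real Clifford algebra generated by $e_1,e_2,e_3$ with $e_ie_j+e_je_i=-2\delta_{ij}$; put $e_0=1$. $S\oplus V$ is the set of paravectors $x=x_0+x_1e_1+x_2e_2+x_3e_3$ ($x_i\in\mathbb{R}$), identified with $\mathbb{R}^4$. $D=\sum_{i=0}^3 e_i\,\partial/\partial x_i$ (acting on the left) and $\Delta=\sum_{i=0}^3\partial^2/\partial x_i^2$. A function $f$ from an open subset of $S\oplus V$ to $\mathbb{R}_{0,3}$ is (left) holomorphic Cliffordian if $D\Delta f=0$ there. *)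

From Stdlib Require Import Reals.
From Coquelicot Require Import Coquelicot.
Open Scope R_scope.

(* Coordinates x_0, x_1, x_2, x_3 of a paravector x = x0 + x1 e1 + x2 e2 + x3 e3. *)
Inductive idx4 := I0 | I1 | I2 | I3.
Definition idx4_eqb (i j : idx4) : bool :=
  match i, j with
  | I0, I0 | I1, I1 | I2, I2 | I3, I3 => true
  | _, _ => false
  end.

Definition pt := idx4 -> R.

(* R_{0,3}: basis blades e_A, A a subset of {1,2,3}, encoded as (a1,a2,a3). *)
Definition blade := (bool * bool * bool)%type.
Definition cl := blade -> R.

Definition sgn (b : bool) : R := if b then -1 else 1.

(* Left multiplication by the generator e_i (i = 1,2,3), computed from
   e_i e_j + e_j e_i = -2 delta_ij: for A = {a1<...<ak},
   e_i e_A = (-1)^{#{a in A | a < i}} * (if i in A then -1 else 1) * e_{A xor {i}}. *)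
Definition lmul_e1 (u : cl) : cl :=
  fun B => let '(b1, b2, b3) := B in sgn (negb b1) * u (negb b1, b2, b3).
Definition lmul_e2 (u : cl) : cl :=
  fun B => let '(b1, b2, b3) := B in sgn b1 * sgn (negb b2) * u (b1, negb b2, b3).
Definition lmul_e3 (u : cl) : cl :=
  fun B => let '(b1, b2, b3) := B in
    sgn b1 * sgn b2 * sgn (negb b3) * u (b1, b2, negb b3).

Definition upd (x : pt) (i : idx4) (t : R) : pt :=
  fun j => if idx4_eqb i j then t else x j.

Definition partial (i : idx4) (h : pt -> R) : pt -> R :=
  fun x => Derive (fun t => h (upd x i t)) (x i).

Definition partial_ex (i : idx4) (h : pt -> R) : Prop :=
  forall x, ex_derive (fun t => h (upd x i t)) (x i).

Definition cont4 (h : pt -> R) : Prop :=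
  forall x eps, 0 < eps -> exists delta, 0 < delta /\
    forall y, (forall i, Rabs (y i - x i) < delta) -> Rabs (h y - h x) < eps.

Fixpoint Ck (k : nat) (h : pt -> R) : Prop :=
  match k with
  | O => cont4 h
  | S k' => cont4 h /\ forall i, partial_ex i h /\ Ck k' (partial i h)
  end.

Definition cpartial (i : idx4) (g : pt -> cl) : pt -> cl :=
  fun x B => partial i (fun y => g y B) x.

Definition laplacian (g : pt -> cl) : pt -> cl :=
  fun x B => cpartial I0 (cpartial I0 g) x B + cpartial I1 (cpartial I1 g) x B
           + cpartial I2 (cpartial I2 g) x B + cpartial I3 (cpartial I3 g) x B.

Definition dirac (g : pt -> cl) : pt -> cl :=
  fun x B => cpartial I0 g x B + lmul_e1 (cpartial I1 g x) B
           + lmul_e2 (cpartial I2 g x) B + lmul_e3 (cpartial I3 g x) B.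

(* Left holomorphic Cliffordian on the whole space: f of class C^3
   (so that D Delta f is defined classically) and D Delta f = 0. *)
Definition holomorphic_cliffordian (f : pt -> cl) : Prop :=
  (forall B, Ck 3 (fun x => f x B)) /\
  (forall x B, dirac (laplacian f) x B = 0).

Definition bounded4 (h : pt -> R) : Prop :=
  exists M, forall x, Rabs (h x) <= M.

(* Let D be the Dirac operator and Dbar = d/dx_0 - sum_i e_i d/dx_i its conjugate, so that
   Dbar D = Delta on C^2 functions.  Since Delta commutes with D, every real component of
   D f is harmonic, and it is bounded because the first derivatives of f are.  By
   Liouville's theorem D f is constant, hence Delta f = Dbar (D f) = 0: every component of
   f is a bounded harmonic function, hence constant.

   Liouville's theorem is proved by reflection rather than by mean values.  Let
   |u| <= M be harmonic and rho the reflection in the hyperplane x_k = p_k.  On the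
   half-box p_k <= x_k <= p_k + d, |x_j - p_j| <= d, the maximum principle compares
   +-(u - u o rho) with 2M/d^2 times the harmonic barrier
   sum_{j <> k} (x_j - p_j)^2 + 4d (x_k - p_k) - 3 (x_k - p_k)^2, which gives
   |u(p + t e_k) - u(p - t e_k)| <= 8Mt/d.  Letting d go to infinity, u is symmetric
   about every coordinate hyperplane, hence invariant under coordinate translations. *)

From Stdlib Require Import Reals Lra FunctionalExtensionality Classical.
From Coquelicot Require Import Coquelicot.
From mathcomp Require all_boot all_order all_algebra all_classical all_reals all_analysis.
From mathcomp Require Rstruct Rstruct_topology.
Open Scope R_scope.

Lemma idx4_eqb_refl i : idx4_eqb i i = true.
Proof. now destruct i. Qed.

Lemma idx4_eqb_true i j : idx4_eqb i j = true -> i = j.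
Proof. now destruct i, j. Qed.

Lemma idx4_eqb_sym i j : idx4_eqb i j = idx4_eqb j i.
Proof. now destruct i, j. Qed.

Lemma upd_eq x i t : upd x i t i = t.
Proof. unfold upd; now rewrite idx4_eqb_refl. Qed.

Lemma upd_neq x i j t : idx4_eqb i j = false -> upd x i t j = x j.
Proof. unfold upd; now intros ->. Qed.

Lemma upd_upd x i s t : upd (upd x i s) i t = upd x i t.
Proof.
  apply functional_extensionality; intro j; unfold upd; now destruct (idx4_eqb i j).
Qed.

Lemma upd_same x i : upd x i (x i) = x.
Proof. apply functional_extensionality; intro j; unfold upd; now destruct i, j. Qed.

Lemma upd_comm x i m s t : idx4_eqb i m = false ->
  upd (upd x m s) i t = upd (upd x i t) m s.
Proof.
  intro E; apply functional_extensionality; intro j; unfold upd.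
  now destruct i, m, j.
Qed.

Lemma pt_as_upd4 x y : x = upd (upd (upd (upd y I0 (x I0)) I1 (x I1)) I2 (x I2)) I3 (x I3).
Proof. apply functional_extensionality; now intros []. Qed.

Definition sum4 (v : idx4 -> R) : R := v I0 + v I1 + v I2 + v I3.

Lemma sum4_term_le (v : idx4 -> R) i : (forall j, 0 <= v j) -> v i <= sum4 v.
Proof.
  intros H; unfold sum4.
  pose proof (H I0); pose proof (H I1); pose proof (H I2); pose proof (H I3).
  destruct i; lra.
Qed.

Lemma sum4_nonneg (v : idx4 -> R) : (forall j, 0 <= v j) -> 0 <= sum4 v.
Proof. intros H; apply Rle_trans with (v I0); [apply H | now apply sum4_term_le]. Qed.

Definition sum_coords (c : idx4 -> R -> R) (x : pt) : R := sum4 (fun j => c j (x j)).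

Lemma sum_coords_upd c x i s : sum_coords c (upd x i s) = c i s + (sum_coords c x - c i (x i)).
Proof. unfold sum_coords, sum4, upd; destruct i; simpl; ring. Qed.

Lemma continuity_pt_eps (g : R -> R) t eps : continuity_pt g t -> 0 < eps ->
  exists d, 0 < d /\ forall s, Rabs (s - t) < d -> Rabs (g s - g t) < eps.
Proof.
  intros Hg He; destruct (Hg eps He) as [d [Hd H]].
  exists d; split; [exact Hd|]; intros s Hs.
  destruct (Req_dec s t) as [->|Hne].
  - unfold Rminus; rewrite Rplus_opp_r, Rabs_R0; exact He.
  - apply (H s); repeat split; auto.
Qed.

Lemma continuity_pt_of_is_derive (g g' : R -> R) :
  (forall t, is_derive g t (g' t)) -> forall t, continuity_pt g t.
Proof.
  intros H t; apply derivable_continuous_pt; exists (g' t); now apply is_derive_Reals.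
Qed.

Lemma cont4_plus (g h : pt -> R) : cont4 g -> cont4 h -> cont4 (fun x => g x + h x).
Proof.
  intros Hg Hh x eps He.
  destruct (Hg x (eps / 2)) as [d1 [Hd1 H1]]; [lra|].
  destruct (Hh x (eps / 2)) as [d2 [Hd2 H2]]; [lra|].
  exists (Rmin d1 d2); split; [now apply Rmin_pos|]; intros y Hy.
  assert (A1 : Rabs (g y - g x) < eps / 2).
  { apply H1; intro i; specialize (Hy i); pose proof (Rmin_l d1 d2); lra. }
  assert (A2 : Rabs (h y - h x) < eps / 2).
  { apply H2; intro i; specialize (Hy i); pose proof (Rmin_r d1 d2); lra. }
  replace (g y + h y - (g x + h x)) with ((g y - g x) + (h y - h x)) by ring.
  pose proof (Rabs_triang (g y - g x) (h y - h x)); lra.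
Qed.

Lemma cont4_scal (k : R) (g : pt -> R) : cont4 g -> cont4 (fun x => k * g x).
Proof.
  intros Hg x eps He.
  pose proof (Rabs_pos k) as Hk.
  destruct (Hg x (eps / (Rabs k + 1))) as [d [Hd H]].
  { apply Rdiv_lt_0_compat; lra. }
  exists d; split; [exact Hd|]; intros y Hy; specialize (H y Hy).
  assert (E : eps / (Rabs k + 1) * (Rabs k + 1) = eps) by (field; lra).
  replace (k * g y - k * g x) with (k * (g y - g x)) by ring.
  rewrite Rabs_mult; pose proof (Rabs_pos (g y - g x)); nra.
Qed.

Lemma cont4_coord k (g : R -> R) : (forall t, continuity_pt g t) -> cont4 (fun x => g (x k)).
Proof.
  intros Hg x eps He; destruct (continuity_pt_eps g (x k) eps (Hg _) He) as [d [Hd H]].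
  exists d; split; auto.
Qed.

Lemma cont4_sum4 (F : idx4 -> pt -> R) :
  (forall j, cont4 (F j)) -> cont4 (fun x => sum4 (fun j => F j x)).
Proof. intros H; unfold sum4; repeat apply cont4_plus; apply H. Qed.

Lemma cont4_sum_coords (c : idx4 -> R -> R) :
  (forall j t, continuity_pt (c j) t) -> cont4 (sum_coords c).
Proof. intros H; apply cont4_sum4; intro j; now apply cont4_coord. Qed.
Definition mirror (k : idx4) (p x : pt) : pt := upd x k (2 * p k - x k).

Lemma mirror_upd_neq k p x i s : idx4_eqb i k = false ->
  mirror k p (upd x i s) = upd (mirror k p x) i s.
Proof.
  intros E; unfold mirror; rewrite (upd_neq x i k s) by exact E.
  apply upd_comm; now rewrite idx4_eqb_sym.
Qed.

Lemma mirror_upd_eq k p x s : mirror k p (upd x k s) = upd (mirror k p x) k (2 * p k - s).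
Proof. unfold mirror; now rewrite !upd_upd, upd_eq. Qed.

Lemma mirror_eq k p x : mirror k p x k = 2 * p k - x k.
Proof. apply upd_eq. Qed.

Lemma mirror_neq k p x i : idx4_eqb i k = false -> mirror k p x i = x i.
Proof. intros E; apply upd_neq; now rewrite idx4_eqb_sym. Qed.

Lemma mirror_fixed k p x : x k = p k -> mirror k p x = x.
Proof. intros E; unfold mirror; replace (2 * p k - x k) with (x k) by lra; apply upd_same. Qed.

Lemma cont4_mirror k p (u : pt -> R) : cont4 u -> cont4 (fun x => u (mirror k p x)).
Proof.
  intros Hu x eps He; destruct (Hu (mirror k p x) eps He) as [d [Hd H]].
  exists d; split; [exact Hd|]; intros y Hy; apply H; intros i.
  unfold mirror, upd; destruct (idx4_eqb k i) eqn:E; [|apply Hy].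
  apply idx4_eqb_true in E; subst i.
  replace (2 * p k - y k - (2 * p k - x k)) with (- (y k - x k)) by ring.
  rewrite Rabs_Ropp; apply Hy.
Qed.

(* Only pure second derivatives along coordinate lines: this is all the maximum principle
   uses, and unlike [Ck 2] it is easy to establish for the barriers and reflections below. *)
Definition coord_derive2 (w : pt -> R) (w' w'' : idx4 -> pt -> R) : Prop :=
  (forall x i t, is_derive (fun s => w (upd x i s)) t (w' i (upd x i t))) /\
  (forall x i, is_derive (fun s => w' i (upd x i s)) (x i) (w'' i x)).

Lemma coord_derive2_plus (v w : pt -> R) v' v'' w' w'' :
  coord_derive2 v v' v'' -> coord_derive2 w w' w'' ->
  coord_derive2 (fun x => v x + w x) (fun i x => v' i x + w' i x)
    (fun i x => v'' i x + w'' i x).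
Proof.
  intros [V1 V2] [W1 W2]; split; intros; now apply (is_derive_plus (V := R_NormedModule)).
Qed.

Lemma coord_derive2_scal (k : R) (w : pt -> R) w' w'' : coord_derive2 w w' w'' ->
  coord_derive2 (fun x => k * w x) (fun i x => k * w' i x) (fun i x => k * w'' i x).
Proof. intros [W1 W2]; split; intros; now apply is_derive_scal. Qed.

Lemma coord_derive2_sum_coords (c c' c'' : idx4 -> R -> R) :
  (forall j t, is_derive (c j) t (c' j t)) -> (forall j t, is_derive (c' j) t (c'' j t)) ->
  coord_derive2 (sum_coords c) (fun i x => c' i (x i)) (fun i x => c'' i (x i)).
Proof.
  intros H1 H2; split; intros x i.
  - intros t; rewrite upd_eq.
    apply (is_derive_ext (fun s => c i s + (sum_coords c x - c i (x i)))).
    { intros s; now rewrite sum_coords_upd. }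
    rewrite <- (Rplus_0_r (c' i t)).
    apply (is_derive_plus (V := R_NormedModule)); [apply H1|].
    apply (is_derive_const (sum_coords c x - c i (x i)) t).
  - apply (is_derive_ext (c' i)); [intros s; now rewrite upd_eq | apply H2].
Qed.

Lemma is_derive_comp_reflect (F : R -> R) c t l : is_derive F (c - t) l ->
  is_derive (fun s => F (c - s)) t (- l).
Proof.
  intros H; replace (- l) with (scal (-1) l) by (unfold scal; simpl; unfold mult; simpl; ring).
  apply (is_derive_comp F (fun s => c - s)); [exact H|].
  auto_derive; auto; ring.
Qed.

Lemma coord_derive2_mirror k p (u : pt -> R) u' u'' : coord_derive2 u u' u'' ->
  coord_derive2 (fun x => u (mirror k p x))
    (fun i x => if idx4_eqb i k then - u' i (mirror k p x) else u' i (mirror k p x))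
    (fun i x => u'' i (mirror k p x)).
Proof.
  intros [H1 H2]; split; intros x i; destruct (idx4_eqb i k) eqn:E.
  - apply idx4_eqb_true in E; subst i; intros t.
    apply (is_derive_ext (fun s => u (upd (mirror k p x) k (2 * p k - s)))).
    { intros s; now rewrite mirror_upd_eq. }
    rewrite mirror_upd_eq.
    apply (is_derive_comp_reflect (fun r => u (upd (mirror k p x) k r))), H1.
  - intros t; apply (is_derive_ext (fun s => u (upd (mirror k p x) i s))).
    { intros s; now rewrite mirror_upd_neq. }
    rewrite mirror_upd_neq by exact E; apply H1.
  - apply idx4_eqb_true in E; subst i.
    apply (is_derive_ext (fun s => - u' k (upd (mirror k p x) k (2 * p k - s)))).
    { intros s; now rewrite mirror_upd_eq. }
    rewrite <- (Ropp_involutive (u'' k (mirror k p x))).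
    apply (is_derive_opp (V := R_NormedModule)).
    apply (is_derive_comp_reflect (fun r => u' k (upd (mirror k p x) k r))).
    rewrite <- mirror_eq; apply H2.
  - apply (is_derive_ext (fun s => u' i (upd (mirror k p x) i s))).
    { intros s; now rewrite mirror_upd_neq. }
    rewrite <- (mirror_neq k p x i E); apply H2.
Qed.

(** * The maximum principle on a box *)

Definition in_box (a b x : pt) : Prop := forall i, a i <= x i <= b i.

Lemma in_box_upd a b x i t : in_box a b x -> a i <= t <= b i -> in_box a b (upd x i t).
Proof.
  intros Hx Ht j; unfold upd; destruct (idx4_eqb i j) eqn:E; [|apply Hx].
  now apply idx4_eqb_true in E; subst j.
Qed.

Module BoxMinimum.
Import all_boot all_order all_algebra all_classical all_reals all_analysis.
Import Rstruct Rstruct_topology.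
Import Order.TTheory GRing.Theory Num.Theory.
Import numFieldNormedType.Exports.

Definition ord_of_idx4 (i : idx4) : 'I_4 :=
  match i with
  | I0 => @Ordinal 4 0 isT | I1 => @Ordinal 4 1 isT
  | I2 => @Ordinal 4 2 isT | I3 => @Ordinal 4 3 isT
  end.

Definition idx4_of_ord (j : 'I_4) : idx4 :=
  match nat_of_ord j with 0%N => I0 | 1%N => I1 | 2%N => I2 | _ => I3 end.

Lemma ord_of_idx4K i : idx4_of_ord (ord_of_idx4 i) = i.
Proof. by case: i. Qed.

Definition pt_of_row (r : 'rV[R]_4) : pt := fun i => r ord0 (ord_of_idx4 i).

Lemma row_of_ptK (y : pt) : pt_of_row (\row_j y (idx4_of_ord j))%R = y.
Proof. by apply: functional_extensionality => i; rewrite /pt_of_row mxE ord_of_idx4K. Qed.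

Lemma cont4_box_min (v : pt -> R) (a b : pt) : (forall i, a i <= b i) -> cont4 v ->
  exists q, in_box a b q /\ forall y, in_box a b y -> v q <= v y.
Proof.
move=> ab cv.
pose A := [set r : 'rV[R]_4 | forall j,
  `[a (idx4_of_ord j), b (idx4_of_ord j)]%classic (r ord0 j)]%classic.
have cA : compact A.
  exact: (@rV_compact _ 4 (fun j => `[a (idx4_of_ord j), b (idx4_of_ord j)]%classic)
    (fun j => @segment_compact _ _ _)).
have A0 : (A !=set0)%classic.
  exists (\row_j a (idx4_of_ord j))%R => j /=; rewrite mxE in_itv /= lexx /=.
  exact/RleP.
have cf : {within A, continuous (v \o pt_of_row)}%classic.
  apply: continuous_subspaceT => r.
  apply/(@cvgrPdist_lt _ R^o _ (nbhs r) (nbhs_filter r)) => e /RltP e0.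
  have [d [/RltP d0 Hd]] := cv (pt_of_row r) e e0.
  have near_coord j : \forall t \near r, (`|r ord0 j - (t : 'rV[R]_4) ord0 j| < d)%R.
    by have /cvgrPdist_lt /(_ d d0) := @coord_continuous R 1 4 ord0 j r.
  near=> t.
  apply/RltP; rewrite /= -RabsE Rabs_minus_sym; apply: Hd => i.
  rewrite Rabs_minus_sym RabsE; apply/RltP.
  by case: i; near: t; apply: near_coord.
have [c Ac Hc] := EVT_min_rV A0 cA cf.
exists (pt_of_row c); split.
  move=> i; rewrite inE in Ac; have := Ac (ord_of_idx4 i).
  by rewrite ord_of_idx4K /= in_itv /= => /andP[h1 h2]; split; apply/RleP.
move=> y Hy; rewrite -(row_of_ptK y).
apply/RleP; apply: Hc; rewrite inE => j /=; rewrite mxE in_itv /=.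
by have [h1 h2] := Hy (idx4_of_ord j); apply/andP; split; apply/RleP.
Unshelve. all: by end_near.
Qed.

End BoxMinimum.

Lemma deriv_neg_right_of_zero (g : R -> R) t0 l b : g t0 = 0 -> is_derive g t0 l -> l < 0 ->
  t0 < b -> exists t1, t0 < t1 < b /\ forall c, t0 < c <= t1 -> g c < 0.
Proof.
  intros G0 Hg Hl Hb; apply is_derive_Reals in Hg.
  destruct (Hg (- l / 2)) as [del Hdel]; [lra|].
  pose proof (cond_pos del) as Hd.
  exists (t0 + Rmin (del / 2) ((b - t0) / 2)).
  pose proof (Rmin_l (del / 2) ((b - t0) / 2)); pose proof (Rmin_r (del / 2) ((b - t0) / 2)).
  assert (0 < Rmin (del / 2) ((b - t0) / 2)) by (apply Rmin_pos; lra).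
  split; [lra|]; intros c Hc.
  assert (Hq := Hdel (c - t0) ltac:(lra) ltac:(rewrite Rabs_right; lra)).
  replace (t0 + (c - t0)) with c in Hq by ring; rewrite G0, Rminus_0_r in Hq.
  apply Rabs_def2 in Hq; destruct Hq as [Hq _].
  assert (Hneg : g c / (c - t0) < 0) by lra.
  destruct (Rle_lt_dec 0 (g c)) as [Hge|]; [|assumption].
  assert (0 <= g c / (c - t0)) by (apply Rdiv_le_0_compat; lra); lra.
Qed.

Lemma second_deriv_nonneg_at_min (H H' : R -> R) h'' t0 a b : a < t0 < b ->
  (forall t, a < t < b -> H t0 <= H t) ->
  (forall t, a < t < b -> is_derive H t (H' t)) ->
  is_derive H' t0 h'' -> 0 <= h''.
Proof.
  intros Ht0 Hmin HH HH'.
  assert (Z : H' t0 = 0).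
  { assert (pr : derivable_pt H t0) by (exists (H' t0); apply is_derive_Reals, HH, Ht0).
    rewrite <- (deriv_minimum H a b t0 pr (proj1 Ht0) (proj2 Ht0)
                  (fun x h1 h2 => Hmin x (conj h1 h2))).
    symmetry; apply derive_pt_eq_0, is_derive_Reals, HH, Ht0. }
  destruct (Rle_lt_dec 0 h'') as [|Hneg]; [assumption|exfalso].
  destruct (deriv_neg_right_of_zero H' t0 h'' b Z HH' Hneg (proj2 Ht0)) as [t1 [Ht1 Hneg']].
  destruct (MVT_cor2 H H' t0 t1) as [c [Ec Hc]]; [lra| |].
  { intros c Hc; apply is_derive_Reals, HH; lra. }
  pose proof (Hmin t1 ltac:(lra)); pose proof (Hneg' c ltac:(lra)); nra.
Qed.

Definition in_open_box (a b x : pt) : Prop := forall i, a i < x i < b i.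

Lemma coord_derive2_min_lap_nonneg (v : pt -> R) v' v'' a b q :
  coord_derive2 v v' v'' -> in_open_box a b q ->
  (forall y, in_box a b y -> v q <= v y) -> 0 <= sum4 (fun i => v'' i q).
Proof.
  intros [H1 H2] Hq Hmin.
  assert (Hi : forall i, 0 <= v'' i q).
  { intros i; apply (second_deriv_nonneg_at_min (fun s => v (upd q i s))
      (fun s => v' i (upd q i s)) (v'' i q) (q i) (a i) (b i)).
    - apply Hq.
    - intros t Ht; rewrite upd_same; apply Hmin, in_box_upd; [|lra].
      intros j; specialize (Hq j); lra.
    - intros t _; apply H1.
    - apply H2. }
  unfold sum4; pose proof (Hi I0); pose proof (Hi I1); pose proof (Hi I2); pose proof (Hi I3).
  lra.
Qed.

Lemma sum_sq_dist_le_diam a b p x : in_box a b p -> in_box a b x ->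
  0 <= sum_coords (fun j s => (s - p j)^2) x <= sum4 (fun j => (b j - a j)^2).
Proof.
  intros Hp Hx; split.
  - apply (sum4_nonneg (fun j => (x j - p j)^2)); intro; apply pow2_ge_0.
  - assert (H : forall j, (x j - p j)^2 <= (b j - a j)^2)
      by (intro j; specialize (Hx j); specialize (Hp j); nra).
    unfold sum_coords, sum4; pose proof (H I0); pose proof (H I1); pose proof (H I2);
      pose proof (H I3); lra.
Qed.

Lemma max_principle_box (w : pt -> R) w' w'' (a b : pt) :
  (forall i, a i < b i) -> cont4 w -> coord_derive2 w w' w'' ->
  (forall x, sum4 (fun i => w'' i x) <= 0) ->
  (forall x, in_box a b x -> ~ in_open_box a b x -> 0 <= w x) ->
  forall x, in_box a b x -> 0 <= w x.
Proof.
  intros Hab Hc HD HL Hbd p Hp.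
  destruct (Rle_lt_dec 0 (w p)) as [|Hneg]; [assumption|exfalso].
  set (L := sum4 (fun j => (b j - a j)^2)).
  assert (HL0 : 0 < L).
  { unfold L, sum4; pose proof (pow_lt (b I0 - a I0) 2 ltac:(specialize (Hab I0); lra)).
    pose proof (pow2_ge_0 (b I1 - a I1)); pose proof (pow2_ge_0 (b I2 - a I2)).
    pose proof (pow2_ge_0 (b I3 - a I3)); lra. }
  set (eps := - w p / (2 * L)).
  assert (Heps : eps * L = - w p / 2) by (unfold eps; field; lra).
  assert (Heps0 : 0 < eps) by (unfold eps; apply Rdiv_lt_0_compat; lra).
  set (Q := sum_coords (fun j s => (s - p j)^2)).
  assert (HQp : Q p = 0) by (unfold Q, sum_coords, sum4; ring).
  (* [v] has negative Laplacian and [v >= w p / 2 > w p = v p] on the boundary,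
     so its minimum over the box is interior. *)
  set (v := fun x => w x + (- eps) * Q x).
  assert (HQd : forall j t, is_derive (fun s => (s - p j)^2) t (2 * (t - p j)))
    by (intros; auto_derive; auto; ring).
  assert (Hvc : cont4 v).
  { apply cont4_plus, cont4_scal, cont4_sum_coords; [exact Hc|].
    intros j; exact (continuity_pt_of_is_derive _ _ (HQd j)). }
  assert (HvD : coord_derive2 v (fun i x => w' i x + (- eps) * (2 * (x i - p i)))
                      (fun i x => w'' i x + (- eps) * 2)).
  { apply coord_derive2_plus; [exact HD|]; apply coord_derive2_scal.
    apply (coord_derive2_sum_coords _ (fun j s => 2 * (s - p j)) (fun _ _ => 2)); [exact HQd|].
    intros; auto_derive; auto; ring. }
  destruct (BoxMinimum.cont4_box_min v a b) as [q [Hq Hmin]];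
    [intros i; now apply Rlt_le | exact Hvc|].
  assert (Hint : in_open_box a b q).
  { apply NNPP; intro Hn.
    pose proof (Hbd q Hq Hn); pose proof (Hmin p Hp).
    pose proof (sum_sq_dist_le_diam a b p q Hp Hq) as HQq; fold Q L in HQq.
    unfold v in *; rewrite HQp in *; nra. }
  pose proof (coord_derive2_min_lap_nonneg v _ _ a b q HvD Hint Hmin) as Hq2.
  pose proof (HL q); unfold sum4 in *; lra.
Qed.

(** * Liouville's theorem *)

Lemma le_div_all_eq0 (D C t : R) : 0 <= D -> 0 <= C -> 0 <= t ->
  (forall d, t < d -> D <= C / d) -> D = 0.
Proof.
  intros HD HC Ht H.
  destruct (Rle_lt_or_eq_dec 0 D HD) as [Hpos|]; [exfalso|auto].
  set (d := t + C / D + 1).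
  assert (HCD : 0 <= C / D) by (apply Rdiv_le_0_compat; lra).
  assert (Hd : D <= C / d) by (apply H; unfold d; lra).
  assert (E : C / d * d = C) by (field; unfold d; lra).
  assert (E' : C / D * D = C) by (field; lra).
  unfold d in *; nra.
Qed.

Definition half_box_lo (p : pt) (k : idx4) (d : R) : pt :=
  fun i => if idx4_eqb i k then p k else p i - d.

Definition half_box_hi (p : pt) (d : R) : pt := fun i => p i + d.

Definition barrier_coord (p : pt) (k : idx4) (d : R) (j : idx4) (s : R) : R :=
  if idx4_eqb j k then 4 * d * (s - p k) - 3 * (s - p k)^2 else (s - p j)^2.

Definition barrier (p : pt) (k : idx4) (d : R) : pt -> R := sum_coords (barrier_coord p k d).

Definition barrier_coord' (p : pt) (k : idx4) (d : R) (j : idx4) (s : R) : R :=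
  if idx4_eqb j k then 4 * d - 6 * (s - p k) else 2 * (s - p j).

Lemma is_derive_barrier_coord p k d j t :
  is_derive (barrier_coord p k d j) t (barrier_coord' p k d j t).
Proof.
  unfold barrier_coord, barrier_coord'; destruct (idx4_eqb j k); auto_derive; auto; ring.
Qed.

Lemma barrier_derive2 p k d :
  coord_derive2 (barrier p k d) (fun i x => barrier_coord' p k d i (x i))
    (fun i _ => if idx4_eqb i k then -6 else 2).
Proof.
  apply (coord_derive2_sum_coords _ _ (fun j _ => if idx4_eqb j k then -6 else 2));
    [apply is_derive_barrier_coord|].
  intros j t; unfold barrier_coord'; destruct (idx4_eqb j k); auto_derive; auto; ring.
Qed.

Lemma barrier_cont p k d : cont4 (barrier p k d).
Proof.
  apply cont4_sum_coords; intros j.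
  apply (continuity_pt_of_is_derive _ _ (is_derive_barrier_coord p k d j)).
Qed.

Lemma barrier_coord_nonneg p k d x j : 0 <= d ->
  in_box (half_box_lo p k d) (half_box_hi p d) x -> 0 <= barrier_coord p k d j (x j).
Proof.
  intros Hd Hx; unfold barrier_coord; destruct (idx4_eqb j k) eqn:E; [|apply pow2_ge_0].
  apply idx4_eqb_true in E; subst j; specialize (Hx k).
  unfold half_box_lo, half_box_hi in Hx; rewrite idx4_eqb_refl in Hx; nra.
Qed.

Lemma barrier_nonneg p k d x : 0 <= d ->
  in_box (half_box_lo p k d) (half_box_hi p d) x -> 0 <= barrier p k d x.
Proof.
  intros Hd Hx; apply (sum4_nonneg (fun j => barrier_coord p k d j (x j))).
  intro j; now apply barrier_coord_nonneg.
Qed.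

Lemma barrier_boundary p k d x : 0 <= d ->
  in_box (half_box_lo p k d) (half_box_hi p d) x ->
  ~ in_open_box (half_box_lo p k d) (half_box_hi p d) x ->
  x k = p k \/ d * d <= barrier p k d x.
Proof.
  intros Hd Hx Hn; apply not_all_ex_not in Hn; destruct Hn as [i Hi].
  assert (Hxi := Hx i).
  assert (Hterm : forall j, d * d = barrier_coord p k d j (x j) -> d * d <= barrier p k d x).
  { intros j ->; apply (sum4_term_le (fun j => barrier_coord p k d j (x j))).
    intro; now apply barrier_coord_nonneg. }
  unfold half_box_lo, half_box_hi, barrier_coord in *; destruct (idx4_eqb i k) eqn:E.
  - apply idx4_eqb_true in E; subst i.
    destruct (Req_dec (x k) (p k)) as [|Hne]; [now left | right].
    apply (Hterm k); rewrite idx4_eqb_refl; replace (x k) with (p k + d) by lra; ring.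
  - right; apply (Hterm i); rewrite E.
    assert (x i = p i - d \/ x i = p i + d) as [-> | ->] by lra; ring.
Qed.

Lemma barrier_on_axis p k d t : barrier p k d (upd p k (p k + t)) = 4 * d * t - 3 * t^2.
Proof.
  unfold barrier; rewrite sum_coords_upd; unfold sum_coords, sum4, barrier_coord.
  rewrite idx4_eqb_refl; destruct k; simpl; ring.
Qed.

Section Liouville.
Variables (u : pt -> R) (u' u'' : idx4 -> pt -> R) (M : R).
Hypothesis u_cont : cont4 u.
Hypothesis u_derive2 : coord_derive2 u u' u''.
Hypothesis u_harmonic : forall x, sum4 (fun i => u'' i x) = 0.
Hypothesis u_bounded : forall x, Rabs (u x) <= M.

Lemma bound_nonneg : 0 <= M.
Proof. apply Rle_trans with (Rabs (u (fun _ => 0))); [apply Rabs_pos | apply u_bounded]. Qed.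

(* [u] and its reflection in [x_k = p_k] agree on that hyperplane, and the harmonic
   barrier dominates [2M] on the rest of the boundary of the half-box. *)
Lemma reflection_comparison_nonneg p k d s : 0 < d -> s = 1 \/ s = -1 ->
  forall x, in_box (half_box_lo p k d) (half_box_hi p d) x ->
  0 <= 2 * (M / (d * d)) * barrier p k d x + s * u x + (- s) * u (mirror k p x).
Proof.
  intros Hd Hs; set (K := M / (d * d)).
  pose proof bound_nonneg as HM.
  assert (HK : 0 <= K) by (unfold K; apply Rdiv_le_0_compat; nra).
  assert (HKd : K * (d * d) = M) by (unfold K; field; lra).
  apply (max_principle_box _
    (fun i x => 2 * K * barrier_coord' p k d i (x i)
       + s * u' i x
       + (- s) * (if idx4_eqb i k then - u' i (mirror k p x) else u' i (mirror k p x)))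
    (fun i x => 2 * K * (if idx4_eqb i k then -6 else 2) + s * u'' i x
       + (- s) * u'' i (mirror k p x))).
  - intros i; unfold half_box_lo, half_box_hi; destruct (idx4_eqb i k) eqn:E; [|lra].
    apply idx4_eqb_true in E; subst i; lra.
  - repeat apply cont4_plus; apply cont4_scal; auto using barrier_cont, cont4_mirror.
  - repeat apply coord_derive2_plus; apply coord_derive2_scal;
      auto using barrier_derive2, coord_derive2_mirror.
  - intros x; pose proof (u_harmonic x); pose proof (u_harmonic (mirror k p x)).
    unfold sum4 in *; destruct k, Hs as [-> | ->]; simpl; lra.
  - intros x Hx Hn; pose proof (barrier_nonneg p k d x ltac:(lra) Hx).
    destruct (barrier_boundary p k d x ltac:(lra) Hx Hn) as [Ek | Hfar].
    + rewrite (mirror_fixed k p x Ek); destruct Hs as [-> | ->]; nra.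
    + assert (M <= K * barrier p k d x) by (rewrite <- HKd; now apply Rmult_le_compat_l).
      pose proof (proj1 (Rabs_le_between _ _) (u_bounded x)).
      pose proof (proj1 (Rabs_le_between _ _) (u_bounded (mirror k p x))).
      destruct Hs as [-> | ->]; lra.
Qed.

Lemma reflection_bound p k t d : 0 < t < d ->
  Rabs (u (upd p k (p k + t)) - u (upd p k (p k - t))) <= 8 * M * t / d.
Proof.
  intros Ht; set (x := upd p k (p k + t)).
  assert (Hx : in_box (half_box_lo p k d) (half_box_hi p d) x).
  { apply in_box_upd.
    - intros i; unfold half_box_lo, half_box_hi; destruct (idx4_eqb i k) eqn:E; [|lra].
      apply idx4_eqb_true in E; subst i; lra.
    - unfold half_box_lo, half_box_hi; rewrite idx4_eqb_refl; lra. }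
  assert (Erefl : mirror k p x = upd p k (p k - t)).
  { unfold x; rewrite mirror_upd_eq; unfold mirror; rewrite upd_upd; f_equal; ring. }
  assert (Hb : 2 * (M / (d * d)) * barrier p k d x <= 8 * M * t / d).
  { pose proof bound_nonneg; unfold x; rewrite barrier_on_axis.
    replace (8 * M * t / d) with (2 * (M / (d * d)) * (4 * d * t)) by (field; lra).
    apply Rmult_le_compat_l; [apply Rmult_le_pos, Rdiv_le_0_compat; nra | nra]. }
  pose proof (reflection_comparison_nonneg p k d 1 ltac:(lra) (or_introl eq_refl) x Hx).
  pose proof (reflection_comparison_nonneg p k d (-1) ltac:(lra) (or_intror eq_refl) x Hx).
  rewrite Erefl in *; apply Rabs_le_between; lra.
Qed.

Lemma reflection_symmetric p k t : u (upd p k (p k + t)) = u (upd p k (p k - t)).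
Proof.
  assert (Hpos : forall t, 0 < t -> u (upd p k (p k + t)) = u (upd p k (p k - t))).
  { intros s Hs; apply Rminus_diag_uniq, Rabs_eq_0.
    apply (le_div_all_eq0 _ (8 * M * s) s); try lra.
    - apply Rabs_pos.
    - pose proof bound_nonneg; nra.
    - intros d Hd; apply reflection_bound; lra. }
  destruct (Rtotal_order t 0) as [Hneg | [-> | Hgt]].
  - replace (p k + t) with (p k - - t) by ring; replace (p k - t) with (p k + - t) by ring.
    symmetry; apply Hpos; lra.
  - f_equal; f_equal; ring.
  - now apply Hpos.
Qed.

Lemma coord_shift_invariant y k s : u (upd y k s) = u y.
Proof.
  pose proof (reflection_symmetric (upd y k ((y k + s) / 2)) k ((s - y k) / 2)) as E.
  rewrite !upd_upd, upd_eq in E.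
  replace ((y k + s) / 2 + (s - y k) / 2) with s in E by field.
  replace ((y k + s) / 2 - (s - y k) / 2) with (y k) in E by field.
  now rewrite upd_same in E.
Qed.

End Liouville.

Theorem bounded_harmonic_const (u : pt -> R) u' u'' :
  cont4 u -> coord_derive2 u u' u'' -> (forall x, sum4 (fun i => u'' i x) = 0) ->
  bounded4 u -> forall x y, u x = u y.
Proof.
  intros Hc HD HL [M HM] x y.
  now rewrite (pt_as_upd4 x y), !(coord_shift_invariant u u' u'' M Hc HD HL HM).
Qed.

(** * Partial derivatives *)

Lemma Ck_cont k h : Ck k h -> cont4 h.
Proof. destruct k; simpl; tauto. Qed.

Lemma Ck_partial_ex k h i : Ck (S k) h -> partial_ex i h.
Proof. intros [_ H]; exact (proj1 (H i)). Qed.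

Lemma Ck_partial k h i : Ck (S k) h -> Ck k (partial i h).
Proof. intros [_ H]; exact (proj2 (H i)). Qed.

Lemma Ck_S_Ck k h : Ck (S k) h -> Ck k h.
Proof.
  revert h; induction k as [|k IH]; intros h [Hc H]; [exact Hc|].
  split; [exact Hc|]; intros i; split; [exact (proj1 (H i)) | apply IH, (proj2 (H i))].
Qed.

Lemma partial_at j h y s : partial j h (upd y j s) = Derive (fun r => h (upd y j r)) s.
Proof. unfold partial; rewrite upd_eq; apply Derive_ext; intros; now rewrite upd_upd. Qed.

Lemma ex_derive_at j h y s : partial_ex j h -> ex_derive (fun r => h (upd y j r)) s.
Proof.
  intros H; generalize (H (upd y j s)); rewrite upd_eq.
  apply ex_derive_ext; intros; now rewrite upd_upd.
Qed.

Lemma coord_derive2_of_partials (g : pt -> R) :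
  (forall i, partial_ex i g) -> (forall i, partial_ex i (partial i g)) ->
  coord_derive2 g (fun i => partial i g) (fun i => partial i (partial i g)).
Proof.
  intros H1 H2; split.
  - intros x i t; rewrite partial_at; now apply Derive_correct, ex_derive_at.
  - intros x i; apply Derive_correct, H2.
Qed.

Lemma partial_plus m (g h : pt -> R) x : partial_ex m g -> partial_ex m h ->
  partial m (fun y => g y + h y) x = partial m g x + partial m h x.
Proof. intros Hg Hh; unfold partial; now apply Derive_plus. Qed.

Lemma partial_scal m k (h : pt -> R) x : partial m (fun y => k * h y) x = k * partial m h x.
Proof. apply Derive_scal. Qed.

Lemma partial_ex_plus m (g h : pt -> R) : partial_ex m g -> partial_ex m h ->
  partial_ex m (fun y => g y + h y).
Proof. intros Hg Hh x; now apply (ex_derive_plus (V := R_NormedModule)). Qed.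

Lemma partial_ex_scal m k (h : pt -> R) : partial_ex m h -> partial_ex m (fun y => k * h y).
Proof. intros H x; now apply ex_derive_scal. Qed.

Lemma partial_sum4 m (F : idx4 -> pt -> R) x : (forall i, partial_ex m (F i)) ->
  partial m (fun y => sum4 (fun i => F i y)) x = sum4 (fun i => partial m (F i) x).
Proof.
  intros H; unfold sum4.
  assert (H01 : partial_ex m (fun y => F I0 y + F I1 y)) by (apply partial_ex_plus; apply H).
  assert (H012 : partial_ex m (fun y => F I0 y + F I1 y + F I2 y))
    by (apply partial_ex_plus; [exact H01 | apply H]).
  now rewrite (partial_plus m _ (F I3) x H012 (H I3)), (partial_plus m _ (F I2) x H01 (H I2)),
    (partial_plus m (F I0) (F I1) x (H I0) (H I1)).
Qed.

Lemma Derive_upd2_fst h x m i s t : idx4_eqb i m = false ->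
  Derive (fun r => h (upd (upd x m r) i t)) s = partial m h (upd (upd x m s) i t).
Proof.
  intros E; rewrite (upd_comm x i m s t E), partial_at.
  apply Derive_ext; intros r; now rewrite (upd_comm x i m r t E).
Qed.

Lemma ex_derive_upd2_fst h x m i s t : idx4_eqb i m = false -> partial_ex m h ->
  ex_derive (fun r => h (upd (upd x m r) i t)) s.
Proof.
  intros E H; apply (ex_derive_ext (fun r => h (upd (upd x i t) m r))).
  - intros r; now rewrite (upd_comm x i m r t E).
  - now apply ex_derive_at.
Qed.

Lemma cont2d_upd2 (h : pt -> R) x i m : cont4 h -> idx4_eqb i m = false ->
  continuity_2d_pt (fun s t => h (upd (upd x m s) i t)) (x m) (x i).
Proof.
  intros Hc E eps; destruct (Hc x eps (cond_pos eps)) as [d [Hd H]].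
  exists (mkposreal d Hd); intros s t Hs Ht; simpl in Hs, Ht.
  rewrite !upd_same; apply H; intros j; unfold upd.
  destruct (idx4_eqb i j) eqn:E1; [apply idx4_eqb_true in E1; now subst j|].
  destruct (idx4_eqb m j) eqn:E2; [apply idx4_eqb_true in E2; now subst j|].
  unfold Rminus; rewrite Rplus_opp_r, Rabs_R0; exact Hd.
Qed.

Lemma partial_comm (g : pt -> R) i m x : Ck 2 g ->
  partial m (partial i g) x = partial i (partial m g) x.
Proof.
  intros HC; destruct (idx4_eqb i m) eqn:E; [now apply idx4_eqb_true in E; subst|].
  set (F := fun s t => g (upd (upd x m s) i t)).
  assert (J1 : forall s t, Derive (fun z => Derive (fun r => F z r) t) s
                           = partial m (partial i g) (upd (upd x m s) i t)).
  { intros s t; rewrite <- Derive_upd2_fst by exact E.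
    apply Derive_ext; intros z; symmetry; apply partial_at. }
  assert (J2 : forall s t, Derive (fun z => Derive (fun r => F r z) s) t
                           = partial i (partial m g) (upd (upd x m s) i t)).
  { intros s t; rewrite partial_at.
    apply Derive_ext; intros z; unfold F; now rewrite Derive_upd2_fst. }
  assert (Ex : upd (upd x m (x m)) i (x i) = x) by now rewrite !upd_same.
  rewrite <- Ex, <- J1, <- J2; apply Schwarz.
  - exists (mkposreal 1 Rlt_0_1); intros s t _ _; unfold F; repeat split.
    + apply ex_derive_upd2_fst; [exact E | eapply Ck_partial_ex; exact HC].
    + apply ex_derive_at; eapply Ck_partial_ex; exact HC.
    + apply (ex_derive_ext (fun z => partial i g (upd (upd x m z) i t))).
      { intros z; apply partial_at. }
      apply ex_derive_upd2_fst; [exact E|]; eapply Ck_partial_ex, Ck_partial; exact HC.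
    + apply (ex_derive_ext (fun z => partial m g (upd (upd x m s) i z))).
      { intros z; now rewrite Derive_upd2_fst. }
      apply ex_derive_at; eapply Ck_partial_ex, Ck_partial; exact HC.
  - apply (continuity_2d_pt_ext (fun s t => partial m (partial i g) (upd (upd x m s) i t))).
    { intros; now rewrite J1. }
    apply cont2d_upd2; [|exact E]; eapply Ck_cont, Ck_partial, Ck_partial; exact HC.
  - apply (continuity_2d_pt_ext (fun s t => partial i (partial m g) (upd (upd x m s) i t))).
    { intros; now rewrite J2. }
    apply cont2d_upd2; [|exact E]; eapply Ck_cont, Ck_partial, Ck_partial; exact HC.
Qed.

(** * The Dirac operator *)

(* Chosen so that [dirac g x] is convertible to [dirac_comb (fun i => cpartial i g x)]. *)
Definition dirac_comb (v : idx4 -> cl) : cl :=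
  fun B => v I0 B + lmul_e1 (v I1) B + lmul_e2 (v I2) B + lmul_e3 (v I3) B.

Definition dirac_bar_comb (v : idx4 -> cl) : cl :=
  fun B => v I0 B - lmul_e1 (v I1) B - lmul_e2 (v I2) B - lmul_e3 (v I3) B.

(* [Dbar D = Delta]: the cross terms cancel because [e_i e_j + e_j e_i = -2 delta_ij]
   and mixed partial derivatives commute. *)
Lemma dirac_bar_dirac_comb (P : idx4 -> idx4 -> cl) B :
  (forall k j C, P k j C = P j k C) ->
  dirac_bar_comb (fun k => dirac_comb (P k)) B = sum4 (fun k => P k k B).
Proof.
  intros Hs; destruct B as [[b1 b2] b3].
  unfold dirac_bar_comb, dirac_comb, lmul_e1, lmul_e2, lmul_e3, sum4.
  rewrite ?(Hs I1 I0), ?(Hs I2 I0), ?(Hs I3 I0), ?(Hs I2 I1), ?(Hs I3 I1), ?(Hs I3 I2).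
  destruct b1, b2, b3; simpl; ring.
Qed.

Lemma sum4_dirac_comb (Q : idx4 -> idx4 -> cl) B :
  sum4 (fun i => dirac_comb (Q i) B) = dirac_comb (fun j C => sum4 (fun i => Q i j C)) B.
Proof.
  destruct B as [[b1 b2] b3]; unfold dirac_comb, lmul_e1, lmul_e2, lmul_e3, sum4; ring.
Qed.

Lemma coord_derive2_dirac_comb (G : idx4 -> blade -> pt -> R) G' G'' B :
  (forall j C, coord_derive2 (G j C) (G' j C) (G'' j C)) ->
  coord_derive2 (fun x => dirac_comb (fun j C => G j C x) B)
    (fun i x => dirac_comb (fun j C => G' j C i x) B)
    (fun i x => dirac_comb (fun j C => G'' j C i x) B).
Proof.
  intros H; destruct B as [[b1 b2] b3]; unfold dirac_comb, lmul_e1, lmul_e2, lmul_e3.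
  repeat apply coord_derive2_plus; try apply coord_derive2_scal; apply H.
Qed.

Lemma cont4_dirac_comb (G : idx4 -> blade -> pt -> R) B :
  (forall j C, cont4 (G j C)) -> cont4 (fun x => dirac_comb (fun j C => G j C x) B).
Proof.
  intros H; destruct B as [[b1 b2] b3]; unfold dirac_comb, lmul_e1, lmul_e2, lmul_e3.
  repeat apply cont4_plus; try apply cont4_scal; apply H.
Qed.

Lemma bounded4_dirac_comb (G : idx4 -> blade -> pt -> R) B :
  (forall j C, bounded4 (G j C)) -> bounded4 (fun x => dirac_comb (fun j C => G j C x) B).
Proof.
  intros H; destruct B as [[b1 b2] b3].
  destruct (H I0 (b1, b2, b3)) as [M0 H0], (H I1 (negb b1, b2, b3)) as [M1 H1],
    (H I2 (b1, negb b2, b3)) as [M2 H2], (H I3 (b1, b2, negb b3)) as [M3 H3].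
  exists (M0 + M1 + M2 + M3); intros x; unfold dirac_comb, lmul_e1, lmul_e2, lmul_e3.
  specialize (H0 x); specialize (H1 x); specialize (H2 x); specialize (H3 x).
  apply Rabs_le_between in H0, H1, H2, H3; apply Rabs_le_between.
  destruct b1, b2, b3; cbn [sgn negb] in *; lra.
Qed.

Lemma partial_dirac_comb m (G : idx4 -> blade -> pt -> R) B x :
  (forall j C, partial_ex m (G j C)) ->
  partial m (fun y => dirac_comb (fun j C => G j C y) B) x
  = dirac_comb (fun j C => partial m (G j C) x) B.
Proof.
  intros H; destruct B as [[b1 b2] b3]; unfold dirac_comb, lmul_e1, lmul_e2, lmul_e3.
  set (k1 := sgn (negb b1)); set (k2 := sgn b1 * sgn (negb b2));
    set (k3 := sgn b1 * sgn b2 * sgn (negb b3)).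
  set (g0 := G I0 (b1, b2, b3)); set (g1 := G I1 (negb b1, b2, b3));
    set (g2 := G I2 (b1, negb b2, b3)); set (g3 := G I3 (b1, b2, negb b3)).
  assert (P1 : partial_ex m (fun y => k1 * g1 y)) by (apply partial_ex_scal, H).
  assert (P2 : partial_ex m (fun y => k2 * g2 y)) by (apply partial_ex_scal, H).
  assert (P3 : partial_ex m (fun y => k3 * g3 y)) by (apply partial_ex_scal, H).
  assert (P01 : partial_ex m (fun y => g0 y + k1 * g1 y))
    by (apply partial_ex_plus; [apply H | exact P1]).
  assert (P012 : partial_ex m (fun y => g0 y + k1 * g1 y + k2 * g2 y))
    by (apply partial_ex_plus; [exact P01 | exact P2]).
  rewrite (partial_plus m _ _ x P012 P3), (partial_plus m _ _ x P01 P2),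
    (partial_plus m g0 _ x (H _ _) P1), !partial_scal; reflexivity.
Qed.

Lemma dirac_comb_ext (v w : idx4 -> cl) B : (forall j C, v j C = w j C) ->
  dirac_comb v B = dirac_comb w B.
Proof.
  intros H; destruct B as [[b1 b2] b3]; unfold dirac_comb, lmul_e1, lmul_e2, lmul_e3.
  now rewrite !H.
Qed.

Section HolomorphicCliffordian.
Variable f : pt -> cl.
Hypothesis f_C3 : forall B, Ck 3 (fun x => f x B).
Hypothesis dirac_laplacian_f : forall x B, dirac (laplacian f) x B = 0.
Hypothesis f_bounded : forall B, bounded4 (fun x => f x B).
Hypothesis partial_f_bounded : forall B i, bounded4 (partial i (fun x => f x B)).

Lemma partial_laplacian m C x :
  partial m (fun y => laplacian f y C) x
  = sum4 (fun i => partial i (partial i (partial m (fun y => f y C))) x).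
Proof.
  pose proof (f_C3 C) as H3; set (g := fun y => f y C) in *.
  change (partial m (fun y => sum4 (fun i => partial i (partial i g) y)) x
          = sum4 (fun i => partial i (partial i (partial m g)) x)).
  rewrite partial_sum4 by (intros i; eapply Ck_partial_ex, Ck_partial, Ck_partial; exact H3).
  assert (Hcomm : forall i, partial m (partial i g) = partial i (partial m g)).
  { intros i; apply functional_extensionality; intros y; apply partial_comm, Ck_S_Ck, H3. }
  assert (E : forall i, partial m (partial i (partial i g)) x
                        = partial i (partial i (partial m g)) x).
  { intros i; rewrite partial_comm, Hcomm; [reflexivity|]; eapply Ck_partial; exact H3. }
  unfold sum4; now rewrite !E.
Qed.

Lemma dirac_f_const B x y : dirac f x B = dirac f y B.
Proof.
  apply (bounded_harmonic_const (fun z => dirac_comb (fun j C => partial j (fun w => f w C) z) B)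
    (fun i z => dirac_comb (fun j C => partial i (partial j (fun w => f w C)) z) B)
    (fun i z => dirac_comb (fun j C => partial i (partial i (partial j (fun w => f w C))) z) B)).
  - apply cont4_dirac_comb; intros j C; eapply Ck_cont, Ck_partial; exact (f_C3 C).
  - apply (coord_derive2_dirac_comb (fun j C => partial j (fun w => f w C))); intros j C.
    apply coord_derive2_of_partials; intros i.
    + eapply Ck_partial_ex, Ck_partial; exact (f_C3 C).
    + eapply Ck_partial_ex, Ck_partial, Ck_partial; exact (f_C3 C).
  - intros z; rewrite sum4_dirac_comb, <- (dirac_laplacian_f z B).
    transitivity (dirac_comb (fun j C => partial j (fun y => laplacian f y C) z) B);
      [|reflexivity].
    apply dirac_comb_ext; intros j C; symmetry; apply partial_laplacian.
  - apply bounded4_dirac_comb; intros j C; apply partial_f_bounded.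
Qed.

Lemma f_component_harmonic B x : sum4 (fun i => partial i (partial i (fun y => f y B)) x) = 0.
Proof.
  assert (Z : forall k C, dirac_comb (fun j C => partial k (partial j (fun y => f y C)) x) C = 0).
  { intros k C; rewrite <- partial_dirac_comb.
    - unfold partial at 1; rewrite (Derive_ext _ (fun _ => dirac f x C)); [apply Derive_const|].
      intros t; apply dirac_f_const.
    - intros j C'; eapply Ck_partial_ex, Ck_partial; exact (f_C3 C'). }
  rewrite <- (dirac_bar_dirac_comb (fun k j C => partial k (partial j (fun y => f y C)) x) B).
  - destruct B as [[b1 b2] b3]; unfold dirac_bar_comb, lmul_e1, lmul_e2, lmul_e3.
    rewrite !Z; ring.
  - intros k j C; apply partial_comm, Ck_S_Ck, f_C3.
Qed.

Lemma f_component_const B x y : f x B = f y B.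
Proof.
  apply (bounded_harmonic_const (fun z => f z B) (fun i => partial i (fun z => f z B))
    (fun i => partial i (partial i (fun z => f z B)))).
  - eapply Ck_cont; exact (f_C3 B).
  - apply coord_derive2_of_partials; intros i.
    + eapply Ck_partial_ex; exact (f_C3 B).
    + eapply Ck_partial_ex, Ck_partial; exact (f_C3 B).
  - apply f_component_harmonic.
  - apply f_bounded.
Qed.

End HolomorphicCliffordian.

Theorem mainTheorem1 (f : pt -> cl) :
  holomorphic_cliffordian f ->
  (forall B, bounded4 (fun x => f x B)) ->
  (forall B i, bounded4 (partial i (fun x => f x B))) ->
  (forall B i j, bounded4 (partial i (partial j (fun x => f x B)))) ->
  exists c : cl, forall x B, f x B = c B.
Proof.
  intros [f_C3 dirac_laplacian_f] f_bounded partial_f_bounded _.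
  exists (f (fun _ => 0)); intros x B.
  exact (f_component_const f f_C3 dirac_laplacian_f f_bounded partial_f_bounded B x (fun _ => 0)).
Qed.
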